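(* Let $t:\Sigma^*\to\Omega^*$ be a rational partial function with suffix-closed domain $X=\mathrm{dom}(t)$, let $B$ be a trim right-subsequential transducer for $t[\mathcal R_t]$, and let $A$ be the right transducer obtained from $B$ by projecting input letters to their first component. If $A$ is not well-behaved, then $X$ contains a linear fooling set for $t$.
   Context: $x\wedge y$: longest common suffix; $\|x,y\|=|x|+|y|-2|x\wedge y|$. $u\mathrel{\mathcal R_t}v$ iff $\{z:uz\in X\}=\{z:vz\in X\}$ and $\{\|t(uw),t(vw)\|:uw,vw\in X\}$ is finite; $\mathcal R_t$ is a finite-index right congruence. For a finite-index right congruence $\mathcal R$, the look-ahead extension is $e_{\mathcal R}(a_1\cdots a_n)=(a_1,[\varepsilon]_{\mathcal R})(a_2,[a_1]_{\mathcal R})\cdots(a_n,[a_1\cdots a_{n-1}]_{\mathcal R})$ over the alphabet $\Sigma\times\Sigma^*/\mathcal R$, and $t[\mathcal R]$ is the partial function with domain $e_{\mathcal R}(X)$ and $t[\mathcal R](e_{\mathcal R}(x))=t(x)$. A real-time right transducer $(Q,\Gamma,\Omega,F,\Delta,I,o)$ has transitions $(q,a,y,p)\in Q\times\Gamma\times\Omega^*\times Q$, read as going from $p$ to $q$ while reading $a$ and outputting $y$; runs read the input from right to left: a run on $a_1\cdots a_n$ from $q_n$ to $q_0$ is $(q_0,a_1,y_1,q_1)\cdots(q_{n-1},a_n,y_n,q_n)$, with output $\mathsf{out}=y_1\cdots y_n$; it is initial if $q_n\in I$, accepting if $q_0\in F$, and then $\mathsf{out}_F=o(q_0)y_1\cdots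 y_n$ where $o:F\to\Omega^*$ is the terminal output; the transducer defines the relation of pairs (input, $\mathsf{out}_F$ of an initial accepting run). It is right-subsequential if $I=\{q_{\mathit{in}}\}$ and it is deterministic when reading right to left (for each state $p$ and letter $a$ at most one transition from $p$ reading $a$); it is trim if every state occurs on some initial accepting run. (By Reutenauer–Schützenberger, $t[\mathcal R_t]$ is right-subsequential.) $A$ has the same states, $F$, $q_{\mathit{in}}$, $o$, and transitions $\{(q,a,y,p):(q,(a,\rho),y,p)\in\Delta_B\}$; it defines $t$ and is unambiguous. Let $q\preceq p$ iff there is a run in $A$ from $p$ to $q$. A word $w$ is guarded by $p$ if there is a run in $A$ on $w$ from $p$ to some $q'$ with $p\preceq q'$; a run from $p$ on $w$ is guarded if $w$ is guarded by $p$. $A$ is well-behaved if for every state $p$ and all guarded runs $\pi,\pi'$ starting in $p$ and ending in $F$ with inputs of equal length, $\mathsf{out}_F(\pi)=\mathsf{out}_F(\pi')$. Linear fooling scheme for $t$: $(u_2,v_2,u,v,Z)$ with $u_2$ a suffix of $u$, $v_2$ a suffix of $v$, $|u_2|=|v_2|$, $\{u_2,v_2\}\{u,v\}^*Z\subseteq X$, and for each $n$ some $z_n\in Z$ with $|z_n|\in O(n)$ and $t(u_2wz_n)\ne t(v_2wz_n)$ for all $w\in\{u,v\}^{\le n}$; $\{u_2,v_2\}\{u,v\}^*Z$ is a linear fooling set. *)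

From mathcomp Require Import all_boot.
Set Implicit Arguments. Unset Strict Implicit. Unset Printing Implicit Defensive.

Section Words.
Variable T : eqType.
Fixpoint lcp (x y : seq T) : seq T :=
  match x, y with
  | a :: x', b :: y' => if a == b then a :: lcp x' y' else [::]
  | _, _ => [::]
  end.
Definition lcs (x y : seq T) : seq T := rev (lcp (rev x) (rev y)).
Definition wdist (x y : seq T) : nat := size x + size y - 2 * size (lcs x y).
End Words.

Section PFun.
Variables (S O : eqType).
Implicit Type t : seq S -> option (seq O).

Definition dom t (x : seq S) : Prop := exists y, t x = Some y.
Definition suffix_closed t : Prop := forall x y, dom t (x ++ y) -> dom t y.

Fixpoint gpath (Q : eqType) (delta : seq (Q * seq S * seq O * Q)) (p q : Q)
    (pi : seq (Q * seq S * seq O * Q)) : bool :=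
  match pi with
  | [::] => p == q
  | tau :: pi' => (tau.1.1.1 == p) && (tau \in delta) && gpath delta tau.2 q pi'
  end.

Definition rational t : Prop :=
  exists (Q : finType) (delta : seq (Q * seq S * seq O * Q)) (I F : pred Q),
    forall x y, t x = Some y <->
      exists (p q : Q) (pi : seq (Q * seq S * seq O * Q)),
        [/\ I p, F q, gpath delta p q pi,
            flatten [seq tau.1.1.2 | tau <- pi] = x &
            flatten [seq tau.1.2 | tau <- pi] = y].

Definition Rt t (u v : seq S) : Prop :=
  (forall z, dom t (u ++ z) <-> dom t (v ++ z)) /\
  exists s : seq nat, forall w y1 y2,
    t (u ++ w) = Some y1 -> t (v ++ w) = Some y2 -> wdist y1 y2 \in s.

(* look-ahead extension, classes given by cls : seq S -> C *)
Variable C : eqType.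
Variable cls : seq S -> C.
Fixpoint ext_aux (p w : seq S) : seq (S * C) :=
  match w with
  | [::] => [::]
  | a :: w' => (a, cls p) :: ext_aux (rcons p a) w'
  end.
Definition ext (w : seq S) : seq (S * C) := ext_aux [::] w.

Definition tR t (y : seq (S * C)) : option (seq O) :=
  if ext (map fst y) == y then t (map fst y) else None.

Definition in_star (u v w : seq S) : Prop :=
  exists ws : seq (seq S), all (fun x => (x == u) || (x == v)) ws /\ w = flatten ws.
Definition in_star_le (n : nat) (u v w : seq S) : Prop :=
  exists ws : seq (seq S),
    [/\ size ws <= n, all (fun x => (x == u) || (x == v)) ws & w = flatten ws].

Definition linear_fooling_scheme t (u2 v2 u v : seq S) (Z : seq S -> Prop) : Prop :=
  [/\ suffix u2 u, suffix v2 v, size u2 = size v2,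
      (forall x w z, (x = u2 \/ x = v2) -> in_star u v w -> Z z -> dom t (x ++ w ++ z)) &
      exists zs : nat -> seq S,
        [/\ forall n, Z (zs n),
            exists c N, forall n, N <= n -> size (zs n) <= c * n &
            forall n w, in_star_le n u v w -> t (u2 ++ w ++ zs n) <> t (v2 ++ w ++ zs n)]].
End PFun.

Record rtransducer (Q : finType) (G O : eqType) := RTransducer {
  rt_final : pred Q;
  rt_delta : seq (Q * G * seq O * Q);   (* (q, a, y, p): from p to q reading a *)
  rt_init : pred Q;
  rt_out : Q -> seq O                    (* terminal output (used on final states) *)
}.

Section Runs.
Variables (Q : finType) (G O : eqType) (T : rtransducer Q G O).

(* is_run p q pi : pi = (q0,a1,y1,q1)...(q_{n-1},a_n,y_n,q_n) is a run
   from p = q_n to q = q_0 *)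
Fixpoint is_run (p q : Q) (pi : seq (Q * G * seq O * Q)) : bool :=
  match pi with
  | [::] => p == q
  | tau :: pi' => (tau.1.1.1 == q) && (tau \in rt_delta T) && is_run p tau.2 pi'
  end.
Definition run_input (pi : seq (Q * G * seq O * Q)) : seq G := [seq tau.1.1.2 | tau <- pi].
Definition run_output (pi : seq (Q * G * seq O * Q)) : seq O := flatten [seq tau.1.2 | tau <- pi].
Definition run_states (q : Q) (pi : seq (Q * G * seq O * Q)) : seq Q := q :: [seq tau.2 | tau <- pi].

Definition realizes (f : seq G -> option (seq O)) : Prop :=
  forall x y, f x = Some y <->
    exists p q pi, [/\ rt_init T p, rt_final T q, is_run p q pi,
                       run_input pi = x & rt_out T q ++ run_output pi = y].

Definition right_subsequential : Prop :=
  (exists qin, forall q, rt_init T q = (q == qin)) /\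
  (forall p a q q' y y', (q, a, y, p) \in rt_delta T -> (q', a, y', p) \in rt_delta T ->
      q = q' /\ y = y').

Definition trim : Prop :=
  forall s : Q, exists p q pi,
    [/\ rt_init T p, rt_final T q, is_run p q pi & s \in run_states q pi].

(* q <= p  iff  reach p q *)
Definition reach (p q : Q) : Prop := exists pi, is_run p q pi.
Definition guarded (p : Q) (w : seq G) : Prop :=
  exists q' pi, [/\ is_run p q' pi, run_input pi = w & reach q' p].

Definition well_behaved : Prop :=
  forall p q q' pi pi',
    is_run p q pi -> is_run p q' pi' ->
    guarded p (run_input pi) -> guarded p (run_input pi') ->
    size (run_input pi) = size (run_input pi') ->
    rt_final T q -> rt_final T q' ->
    rt_out T q ++ run_output pi = rt_out T q' ++ run_output pi'.
End Runs.

Definition projA (Q : finType) (G C O : eqType) (B : rtransducer Q (G * C)%type O)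
  : rtransducer Q G O :=
  RTransducer (rt_final B)
    [seq (tau.1.1.1, tau.1.1.2.1, tau.1.2, tau.2) | tau <- rt_delta B]
    (rt_init B) (rt_out B).

(* Pick guarded runs pi, pi' of A from a state p to final states q, q', with equal-length
   inputs u2, v2 and different final outputs. Guardedness closes u2 and v2 into loops at p
   with inputs u and v, and trimness gives an initial run rho of B into p; let z be the word
   of first components of its input. For w in {u,v}^*, read by a loop l at p, the words
   u2 w z and v2 w z are read by accepting runs of B, so
     t(u2 w z) = o(q) out(pi) out(l) out(rho),   t(v2 w z) = o(q') out(pi') out(l) out(rho),
   which differ because their prefixes do: Z = {z} is a linear fooling scheme. *)
From mathcomp Require Import all_boot.
From Stdlib Require Import Classical.

Set Implicit Arguments.
Unset Strict Implicit.
Unset Printing Implicit Defensive.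

Lemma cat_injr (T : eqType) (s : seq T) : injective (fun x => x ++ s).
Proof.
move=> x y /(congr1 (rev \o drop (size s) \o rev)) /=.
by rewrite !rev_cat !drop_size_cat ?size_rev // !revK.
Qed.

Section Runs.
Variables (Q : finType) (G O : eqType) (T : rtransducer Q G O).
Implicit Types (pi : seq (Q * G * seq O * Q)) (p q : Q).

Lemma run_input_cat pi1 pi2 :
  run_input (pi1 ++ pi2) = run_input pi1 ++ run_input pi2.
Proof. exact: map_cat. Qed.

Lemma run_output_cat pi1 pi2 :
  run_output (pi1 ++ pi2) = run_output pi1 ++ run_output pi2.
Proof. by rewrite /run_output map_cat flatten_cat. Qed.

Lemma is_run_cat p m q pi1 pi2 :
  is_run T m q pi2 -> is_run T p m pi1 -> is_run T p q (pi2 ++ pi1).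
Proof.
elim: pi2 q => [|tau pi2 IH] q /=; first by move=> /eqP ->.
by case/andP=> /andP[-> ->] run2 run1; apply: IH.
Qed.

Lemma reach_run_state p q pi s :
  is_run T p q pi -> s \in run_states q pi -> reach T p s.
Proof.
elim: pi q => [|tau pi IH] q /=.
  by move=> /eqP->; rewrite inE => /eqP->; exists [::] => /=.
case/andP=> /andP[/eqP tau_q tau_in] run_pi.
rewrite inE => /predU1P[->|]; last exact: IH.
by exists (tau :: pi); rewrite /= tau_q eqxx tau_in.
Qed.

Lemma trim_accessible s : trim T -> exists2 p, rt_init T p & reach T p s.
Proof.
move=> /(_ s) [p [q [pi [init_p _ run_pi s_pi]]]].
by exists p => //; apply: reach_run_state run_pi s_pi.
Qed.

Definition loop_word (p : Q) (w : seq G) : Prop :=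
  exists pi, is_run T p p pi /\ run_input pi = w.

Lemma loop_word_cat p w1 w2 :
  loop_word p w1 -> loop_word p w2 -> loop_word p (w1 ++ w2).
Proof.
move=> [pi1 [run1 <-]] [pi2 [run2 <-]].
by exists (pi1 ++ pi2); rewrite run_input_cat; split=> //; apply: is_run_cat run1 run2.
Qed.

Lemma guarded_loop p w : guarded T p w -> exists2 u, suffix w u & loop_word p u.
Proof.
move=> [q [pi [run_pi <- [back run_back]]]].
exists (run_input (back ++ pi)); first by rewrite run_input_cat suffix_suffix.
by exists (back ++ pi); split=> //; apply: is_run_cat run_back run_pi.
Qed.

Lemma in_star_loop p u v w :
  loop_word p u -> loop_word p v -> in_star u v w -> loop_word p w.
Proof.
move=> loop_u loop_v [ws [+ ->]]; elim: ws => [|x ws IH] /=.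
  by exists [::] => /=.
by case/andP=> /orP[] /eqP-> /IH; apply: loop_word_cat.
Qed.
End Runs.

Section Projection.
Variables (Q : finType) (G C O : eqType) (B : rtransducer Q (G * C)%type O).

Lemma projA_run_lift p q pi : is_run (projA B) p q pi ->
  exists piB, [/\ is_run B p q piB,
    map fst (run_input piB) = run_input pi & run_output piB = run_output pi].
Proof.
elim: pi q => [|tau pi IH] q /=; first by exists [::].
case/andP=> /andP[/eqP <- /mapP[tauB tauB_in ->]] /IH[piB [runB inB outB]].
exists (tauB :: piB); split=> /=; first by rewrite eqxx tauB_in.
  by rewrite inB.
by rewrite /run_output /= -/(run_output piB) outB.
Qed.

Variables (t : seq G -> option (seq O)) (cls : seq G -> C).
Hypothesis B_realizes : realizes B (tR cls t).

Lemma realizes_tR_run p q pi : rt_init B p -> rt_final B q -> is_run B p q pi ->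
  t (map fst (run_input pi)) = Some (rt_out B q ++ run_output pi).
Proof.
move=> init_p final_q run_pi.
have : tR cls t (run_input pi) = Some (rt_out B q ++ run_output pi).
  by apply/B_realizes; exists p, q, pi.
by rewrite /tR; case: ifP.
Qed.

Lemma projA_run_value p0 p q rho pi : rt_init B p0 -> is_run B p0 p rho ->
  rt_final B q -> is_run (projA B) p q pi ->
  t (run_input pi ++ map fst (run_input rho)) =
    Some (rt_out B q ++ run_output pi ++ run_output rho).
Proof.
move=> init_p0 run_rho final_q /projA_run_lift[piB [runB <- <-]].
rewrite -map_cat -run_input_cat -run_output_cat.
by apply: realizes_tR_run (is_run_cat runB run_rho).
Qed.

Lemma fooling_scheme_of_guarded_runs p q q' pi pi' :
  (exists2 p0, rt_init B p0 & reach B p0 p) ->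
  is_run (projA B) p q pi -> is_run (projA B) p q' pi' ->
  guarded (projA B) p (run_input pi) -> guarded (projA B) p (run_input pi') ->
  size (run_input pi) = size (run_input pi') ->
  rt_final B q -> rt_final B q' ->
  rt_out B q ++ run_output pi != rt_out B q' ++ run_output pi' ->
  exists u v (Z : seq G -> Prop),
    linear_fooling_scheme t (run_input pi) (run_input pi') u v Z.
Proof.
move=> [p0 init_p0 [rho run_rho]] run_pi run_pi' /guarded_loop[u pi_u loop_u]
  /guarded_loop[v pi'_v loop_v] eq_size final_q final_q' neq_out.
set z := map fst (run_input rho).
have value q2 pi2 l :
    is_run (projA B) p q2 pi2 -> rt_final B q2 -> is_run (projA B) p p l ->
    t (run_input pi2 ++ run_input l ++ z) =
      Some ((rt_out B q2 ++ run_output pi2) ++ run_output l ++ run_output rho).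
  move=> run2 final2 run_l.
  have := projA_run_value init_p0 run_rho final2 (is_run_cat run2 run_l).
  by rewrite run_input_cat run_output_cat !catA.
exists u, v, (eq^~ z); split=> //.
  move=> x w _ [->|->] /(in_star_loop loop_u loop_v)[l [run_l <-]] ->.
    by rewrite /dom (value _ _ _ run_pi final_q run_l); eexists.
  by rewrite /dom (value _ _ _ run_pi' final_q' run_l); eexists.
exists (fun=> z); split=> //.
  by exists (size z), 1 => n; apply: leq_pmulr.
move=> n w [ws [_ ws_uv w_ws]].
have [l [run_l <-]] : loop_word (projA B) p w.
  by apply: in_star_loop loop_u loop_v _; exists ws; split.
rewrite (value _ _ _ run_pi final_q run_l) (value _ _ _ run_pi' final_q' run_l).
by move=> [/cat_injr eq_out]; rewrite eq_out eqxx in neq_out.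
Qed.
End Projection.

Theorem proposition23 (Sigma Omega : finType) (t : seq Sigma -> option (seq Omega))
    (Cls : finType) (cls : seq Sigma -> Cls)
    (Q : finType) (B : rtransducer Q (Sigma * Cls)%type Omega) :
  rational t ->
  suffix_closed t ->
  (forall u v, cls u = cls v <-> Rt t u v) ->
  (forall c : Cls, exists u, cls u = c) ->
  realizes B (tR cls t) ->
  right_subsequential B ->
  trim B ->
  ~ well_behaved (projA B) ->
  exists (u2 v2 u v : seq Sigma) (Z : seq Sigma -> Prop),
    linear_fooling_scheme t u2 v2 u v Z.
Proof.
move=> _ _ _ _ B_realizes _ B_trim not_well_behaved.
apply: NNPP => no_scheme; apply: not_well_behaved.
move=> p q q' pi pi' run_pi run_pi' guarded_pi guarded_pi' eq_size final_q final_q'.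
apply/eqP/negPn/negP => neq_out; apply: no_scheme.
have [u [v [Z scheme]]] := fooling_scheme_of_guarded_runs B_realizes
  (trim_accessible p B_trim) run_pi run_pi' guarded_pi guarded_pi' eq_size
  final_q final_q' neq_out.
by exists (run_input pi), (run_input pi'), u, v, Z.
Qed.
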